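(* Let $\nu\in(\frac12,1]$. Let $x\in\mathrm{dom}(\mathcal R)$ satisfy $\mathcal R(x)=\inf\{\mathcal R(z):z\in\mathbb X,\ Az=Ax\}$, and for every $\alpha>0$ let $x_\alpha\in R_\alpha(Ax)$ be any selection. The following are equivalent: (i) there is $c_1>0$ with $\|Ax-Ax_\alpha\|_{\mathbb Y}\le c_1\alpha^\nu$ for all $\alpha>0$; (ii) there is $c_2>0$ with $\sigma_x(\alpha)\le c_2\alpha^{2\nu-1}$ for all $\alpha>0$; (iii) there is $c_3>0$ with $\mathcal R(x)-\mathcal R(z)\le c_3\|Ax-Az\|_{\mathbb Y}^{\frac{2\nu-1}{\nu}}$ for all $z\in\mathbb X$. More precisely, (i) implies (ii) with $c_2=\frac{c_1^2}{4\nu-2}$, (ii) implies (iii) with $c_3=2c_2^{\frac1{2\nu}}$, and (iii) implies (i) with $c_1=c_3^\nu$.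
   Context: Standing setting: $\mathbb X$ is a real Banach space and $\tau$ a topology on $\mathbb X$ such that $(\mathbb X,\tau)$ is locally convex Hausdorff. $\mathcal R:\mathbb X\to(-\infty,\infty]$ is proper and convex with $\tau$-compact sublevel sets $\{\mathcal R\le\lambda\}$ for all $\lambda\in\mathbb R$. $\mathbb Y$ is a real Hilbert space and $A:\mathbb X\to\mathbb Y$ is linear and $\tau$-to-weak continuous. $T_\alpha(x,g):=\frac1{2\alpha}\|g-Ax\|_{\mathbb Y}^2+\mathcal R(x)$ and $R_\alpha(g):=\operatorname{argmin}_{x\in\mathrm{dom}(\mathcal R)}T_\alpha(x,g)$ for $\alpha>0$, $g\in\mathbb Y$. The defect of the Tikhonov functional is $\sigma_x(\alpha):=T_\alpha(x,Ax)-T_\alpha(x_\alpha,Ax)=\mathcal R(x)-\mathcal R(x_\alpha)-\frac1{2\alpha}\|Ax-Ax_\alpha\|^2_{\mathbb Y}$. *)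

From HB Require Import structures.
From mathcomp Require Import all_boot all_order all_algebra.
From mathcomp Require Import all_classical all_reals all_analysis.
Set Implicit Arguments. Unset Strict Implicit. Unset Printing Implicit Defensive.
Import Order.TTheory GRing.Theory Num.Theory.
Import numFieldNormedType.Exports.
Local Open Scope classical_set_scope.
Local Open Scope ring_scope.

(* A (second) norm on the carrier of the locally convex space X which makes
   X a real Banach space: norm axioms + completeness w.r.t. this norm. *)
Definition is_banach_norm (R : realType) (X : tvsType R) (nX : X -> R) : Prop :=
  [/\ (forall x, 0 <= nX x),
      (forall x, nX x = 0 -> x = 0),
      (forall (a : R) x, nX (a *: x) = `|a| * nX x),
      (forall x y, nX (x + y) <= nX x + nX y) &
      (forall u : nat -> X,
          (forall e : R, 0 < e -> exists N : nat, forall m n : nat,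
               (N <= m)%N -> (N <= n)%N -> nX (u m - u n) < e) ->
          exists l : X, forall e : R, 0 < e -> exists N : nat,
               forall n : nat, (N <= n)%N -> nX (u n - l) < e)].

(* Y is a real Hilbert space: a complete normed space whose norm is induced
   by the inner product ip (symmetric, bilinear, <y,y> = ||y||^2). *)
Definition is_inner_product (R : realType) (Y : completeNormedModType R)
  (ip : Y -> Y -> R) : Prop :=
  [/\ (forall y z, ip y z = ip z y),
      (forall (a : R) y z w, ip (a *: y + z) w = a * ip y w + ip z w) &
      (forall y, ip y y = `|y| ^+ 2)].

(* A : X -> Y is continuous from (X, tau) to (Y, weak topology): every
   functional z |-> <y, A z> is tau-continuous. *)
Definition tau_weak_continuous (R : realType) (X : tvsType R)
  (Y : completeNormedModType R) (ip : Y -> Y -> R) (A : X -> Y) : Prop :=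
  forall y : Y, continuous (fun z : X => ip y (A z)).

Definition proper_fun (R : realType) (X : Type) (F : X -> \bar R) : Prop :=
  (forall x, F x != -oo%E) /\ (exists x, F x < +oo)%E.

Definition convex_fun (R : realType) (X : lmodType R) (F : X -> \bar R) : Prop :=
  forall (x y : X) (t : R), 0 < t < 1 ->
    (F (t *: x + (1 - t) *: y)%R <= t%:E * F x + (1 - t)%:E * F y)%E.

Definition dom (R : realType) (X : Type) (F : X -> \bar R) : set X :=
  [set x | (F x < +oo)%E].

Definition tikh (R : realType) (X : Type) (Y : normedModType R)
  (A : X -> Y) (F : X -> \bar R) (alpha : R) (x : X) (g : Y) : \bar R :=
  (((2 * alpha)^-1 * `|g - A x| ^+ 2)%:E + F x)%E.

Definition tikh_argmin (R : realType) (X : Type) (Y : normedModType R)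
  (A : X -> Y) (F : X -> \bar R) (alpha : R) (g : Y) : set X :=
  [set x | dom F x /\ forall z, dom F z -> (tikh A F alpha x g <= tikh A F alpha z g)%E].

(* defect sigma_x(alpha) = T_alpha(x, A x) - T_alpha(x_alpha, A x)
   (both terms finite when x, x_alpha lie in dom R) *)
Definition defect (R : realType) (X : Type) (Y : normedModType R)
  (A : X -> Y) (F : X -> \bar R) (x : X) (xa : R -> X) (alpha : R) : R :=
  fine (tikh A F alpha x (A x) - tikh A F alpha (xa alpha) (A x))%E.

From HB Require Import structures.
From mathcomp Require Import all_boot all_order all_algebra.
From mathcomp Require Import all_classical all_reals all_analysis.
From mathcomp Require Import ring lra.
Import Order.TTheory GRing.Theory Num.Theory.
Import numFieldNormedType.Exports.
Local Open Scope classical_set_scope.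
Local Open Scope ring_scope.
Set Implicit Arguments.
Unset Strict Implicit.
Unset Printing Implicit Defensive.

(* The proof rests on three elementary consequences of the minimality of x_a:
   - comparing x_b with x_a (b < a) bounds the growth of sigma by
     res(a)^2 (1/(2b) - 1/(2a))                          [defect_increment];
   - comparing x_a with the convex combination t x + (1 - t) x_a, t -> 0,
     gives res(a)^2 / a <= R(x) - R(x_a)                 [residual_le_gap];
   - comparing x_a with an arbitrary z gives R(x_a) + res(a)^2/(2a) <=
     R(z) + ||A x - A z||^2/(2a)                         [tikh_optimality].
   (i) => (ii) integrates the first bound along geometric sequences
   [power_bound_of_decrements]; this needs sigma(0+) = 0, which follows from
   the compactness of the sublevel sets of R, the weak continuity of A and
   the minimality of R(x) among solutions of A z = A x [gap_vanishes].
   (ii) => (iii) evaluates the third bound at the alpha balancing both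
   terms [balanced_parameter], and (iii) => (i) combines (iii) at z = x_a
   with the second bound [powR_absorb]. *)

Section RealFacts.
Variable R : realType.
Implicit Types a b c d q r s t nu K : R.

Lemma le_vanishing_slack a b c :
  (forall t, 0 < t < 1 -> a - t * c <= b) -> a <= b.
Proof.
move=> H; apply/ler_addgt0Pr => e e0.
set den := `|c| + e + 1.
have den_gt : e < den by rewrite /den -addrA ltr_wpDl // ltrDl.
have den0 : 0 < den by apply: lt_trans den_gt.
set t := e / den.
have t01 : 0 < t < 1 by rewrite divr_gt0 //= ltr_pdivrMr // mul1r.
have tc : t * c <= e.
  apply: le_trans (ler_norm _) _; rewrite normrM (gtr0_norm (andP t01).1).
  rewrite /t mulrAC ler_pdivrMr // ler_pM2l // /den -addrA lerDl.
  by rewrite addr_ge0 ?ltW.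
have := H t t01; lra.
Qed.

(* Bernoulli's inequality for exponents in (0, 1], obtained from Young's
   inequality [conjugate_powR] with conjugate exponents 1/s and 1/(1-s). *)
Lemma powR_bernoulli q s : 0 < q < 1 -> 0 < s <= 1 -> s * (1 - q) <= 1 - q `^ s.
Proof.
case/andP=> q0 q1 /andP[s0 s1].
have [->|sn1] := eqVneq s 1; first by rewrite powRr1 ?(ltW q0) // mul1r.
have s1' : s < 1 by rewrite lt_neqAle sn1.
have h1s : 0 < (1 - s)^-1 by rewrite invr_gt0 subr_gt0.
have hs' : 0 < s^-1 by rewrite invr_gt0.
have hpq : s^-1^-1 + (1 - s)^-1^-1 = 1 by rewrite !invrK addrC subrK.
have := conjugate_powR (powR_ge0 q s) ler01 hs' h1s hpq.
rewrite powR1 -powRrM mulfV ?gt_eqF // powRr1 ?(ltW q0) // mulr1 !invrK.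
lra.
Qed.

Lemma geometric_descent (phi : R -> R) q : 0 < q ->
  (forall a, 0 < a -> phi a <= phi (q * a)) ->
  forall n a, 0 < a -> phi a <= phi (q ^+ n * a).
Proof.
move=> q0 mono; elim=> [|n IH] a a0; first by rewrite expr0 mul1r.
apply: le_trans (IH _ a0) _.
by rewrite exprS -mulrA mono // mulr_gt0 // exprn_gt0.
Qed.

Lemma geometric_small q a d : 0 < q < 1 -> 0 < a -> 0 < d ->
  exists n, q ^+ n * a < d.
Proof.
case/andP=> q0 q1 a0 d0; have q_lt1 : `|q| < 1 by rewrite gtr0_norm.
have [N _ HN] := cvgr0_norm_lt _ (cvg_expr q_lt1) _ (divr_gt0 d0 a0).
exists N; have := HN N (leqnn N).
by rewrite /= gtr0_norm ?exprn_gt0 // -ltr_pdivlMr.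
Qed.

(* Subtracting the potential D b^s with D = C / (q s) turns the decrement
   bound C b^s (1 - q) / q over [q b, b] into monotonicity along b -> q b;
   this is where Bernoulli's inequality s (1 - q) <= 1 - q^s enters. *)
Lemma potential_step (sigma : R -> R) C s q b :
  0 < s <= 1 -> 0 <= C -> 0 < q < 1 -> 0 < b ->
  sigma b - sigma (q * b) <= C * b `^ s * (1 - q) / q ->
  sigma b - C / (q * s) * b `^ s <= sigma (q * b) - C / (q * s) * (q * b) `^ s.
Proof.
move=> s01 C0 q01 b0 decr; have /andP[s0 _] := s01; have /andP[q0 _] := q01.
set D := C / (q * s).
have DP0 : 0 <= D * b `^ s by rewrite mulr_ge0 ?powR_ge0 // divr_ge0 // mulr_ge0 // ltW.
have eqC : C * b `^ s * (1 - q) / q = D * b `^ s * (s * (1 - q)).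
  by rewrite /D; field; rewrite !gt_eqF.
have := ler_wpM2l DP0 (powR_bernoulli q01 s01).
rewrite (powRM _ (ltW q0) (ltW b0)) -eqC; lra.
Qed.

(* If sigma vanishes at 0+ and its
   decrements over [q a, a] are bounded by C a^s (1 - q) / q, then
   sigma a <= (C / s) a^s: this is the integral bound
   sigma a = int_0^a sigma' <= int_0^a C t^(s-1) dt, carried out along
   geometric sequences and letting the ratio q tend to 1. *)
Lemma power_bound_of_decrements (sigma : R -> R) C s :
  0 < s <= 1 -> 0 <= C ->
  (forall a q, 0 < a -> 0 < q < 1 ->
     sigma a - sigma (q * a) <= C * a `^ s * (1 - q) / q) ->
  (forall e, 0 < e -> exists2 d, 0 < d & forall b, 0 < b -> b < d -> sigma b <= e) ->
  forall a, 0 < a -> sigma a <= C / s * a `^ s.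
Proof.
move=> s01 C0 decr vanish a a0; have /andP[s0 _] := s01.
apply: (@le_vanishing_slack _ _ (sigma a)) => t /andP[t0 t1].
set q := 1 - t; have q01 : 0 < q < 1 by rewrite subr_gt0 t1 ltrBlDr ltrDl t0.
have /andP[q0 q1] := q01.
set D := C / (q * s).
have D0 : 0 <= D by rewrite divr_ge0 // mulr_ge0 ?ltW.
apply/ler_addgt0Pr => e e0.
have [d d0 small] := vanish e e0.
have [n qna] := geometric_small q01 a0 d0.
have qna0 : 0 < q ^+ n * a by rewrite mulr_gt0 // exprn_gt0.
have descent := geometric_descent q0
  (fun b (b0 : 0 < b) => potential_step s01 C0 q01 b0 (decr b q b0 q01)) n a0.
have tail_small := small _ qna0 qna.
have : 0 <= D * (q ^+ n * a) `^ s by rewrite mulr_ge0 ?powR_ge0.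
have qD : q * D = C / s by rewrite /D; field; rewrite !gt_eqF.
rewrite -/D -qD in descent * => tail0.
have : q * sigma a <= q * (D * a `^ s) + q * e.
  by rewrite -mulrDr ler_pM2l //; lra.
have : q * e <= e by rewrite -[leRHS]mul1r ler_pM2r // ltW.
rewrite /q; lra.
Qed.

Lemma powR_sq_split d nu : 0 < d -> 0 < nu ->
  d ^+ 2 = d `^ ((2 * nu - 1) / nu) * d `^ nu^-1.
Proof.
move=> d0 nu0; have hp : (2 * nu - 1) / nu + nu^-1 = 2 by field; rewrite gt_eqF.
by rewrite -powRD ?hp ?gt_eqF ?implybT // -(powR_mulrn _ (ltW d0)).
Qed.

Lemma powR_absorb r K nu : 0 <= r -> 0 <= K -> 0 < nu ->
  r ^+ 2 <= K * r `^ ((2 * nu - 1) / nu) -> r <= K `^ nu.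
Proof.
move=> r0 K0 nu0; have [->|rn0] := eqVneq r 0; first by rewrite powR_ge0.
have rp : 0 < r by rewrite lt_neqAle eq_sym rn0.
rewrite (powR_sq_split rp nu0) mulrC ler_pM2r ?powR_gt0 // => h.
have := ge0_ler_powR (ltW nu0) (powR_ge0 _ _) K0 h.
by rewrite -powRrM mulVf ?gt_eqF // powRr1.
Qed.

(* Choosing alpha = d^(1/nu) / c^(1/(2nu)) balances the two terms
   c alpha^(2nu-1) and d^2/alpha: both equal c^(1/(2nu)) d^((2nu-1)/nu). *)
Lemma balanced_parameter c d nu : 0 < c -> 0 < d -> 0 < nu ->
  exists2 al, 0 < al &
    c * al `^ (2 * nu - 1) = c `^ (2 * nu)^-1 * d `^ ((2 * nu - 1) / nu) /\
    d ^+ 2 / al = c `^ (2 * nu)^-1 * d `^ ((2 * nu - 1) / nu).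
Proof.
move=> c0 d0 nu0.
set u := c `^ (2 * nu)^-1; set v := d `^ nu^-1.
have u0 : 0 < u by rewrite powR_gt0.
have v0 : 0 < v by rewrite powR_gt0.
have hu : u `^ (2 * nu) = c.
  by rewrite /u -powRrM mulVf ?gt_eqF ?mulr_gt0 // powRr1 // ltW.
have hv : v `^ (2 * nu) = d ^+ 2.
  rewrite /v -powRrM.
  have -> : nu^-1 * (2 * nu) = 2 by field; rewrite gt_eqF.
  by rewrite -(powR_mulrn _ (ltW d0)).
exists (v / u); first by rewrite divr_gt0.
rewrite (powR_sq_split d0 nu0) -/v; split; last by field; rewrite !gt_eqF.
have inv_pow : (u^-1) `^ (2 * nu) = c^-1.
  by rewrite -(powR_inv1 (ltW u0)) -powRrM mulN1r powRN hu.
rewrite powRB; last by apply/implyP => _; rewrite gt_eqF // divr_gt0.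
rewrite powRr1 ?divr_ge0 ?ltW // (powRM _ (ltW v0)) ?invr_ge0 ?ltW //.
rewrite inv_pow hv (powR_sq_split d0 nu0) -/v.
by field; rewrite !gt_eqF.
Qed.

Lemma powR_sq_shift a nu : 0 < a -> (a `^ nu) ^+ 2 = a `^ (2 * nu - 1) * a.
Proof.
move=> a0; rewrite -(powR_mulrn _ (powR_ge0 _ _)) -powRrM.
rewrite -{3}(powRr1 (ltW a0)) -powRD; last by apply/implyP => _; rewrite gt_eqF.
by congr (_ `^ _); ring.
Qed.

Lemma rate_exponent nu : 2^-1 < nu <= 1 -> 0 < 2 * nu - 1 <= 1.
Proof.
case/andP=> nu_gt nu_le; have half : 2 * 2^-1 = 1 :> R by rewrite mulfV.
by apply/andP; split; nra.
Qed.

Lemma rate_nu_pos nu : 2^-1 < nu <= 1 -> 0 < nu.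
Proof. by case/andP=> nu_gt _; apply: lt_trans nu_gt; rewrite invr_gt0. Qed.

Lemma power_rate_vanishes (f : R -> R) c nu : 0 < c -> 0 < nu ->
  (forall b, 0 < b -> f b <= c * b `^ nu) ->
  forall e, 0 < e -> exists2 d, 0 < d & forall b, 0 < b -> b < d -> f b <= e.
Proof.
move=> c0 nu0 rate e e0; exists ((e / c) `^ nu^-1); first by rewrite powR_gt0 ?divr_gt0.
move=> b b0 bd; apply: le_trans (rate _ b0) _.
rewrite mulrC -ler_pdivlMr //.
have := gt0_ltr_powR nu0 (ltW b0) (powR_ge0 _ _) bd.
rewrite -powRrM mulVf ?gt_eqF // powRr1; first exact: ltW.
by rewrite divr_ge0 ?ltW.
Qed.
End RealFacts.

Section InnerProduct.
Variables (R : realType) (Y : completeNormedModType R) (ip : Y -> Y -> R).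
Hypothesis hip : is_inner_product ip.

Lemma ipD y z w : ip (y + z) w = ip y w + ip z w.
Proof. by case: hip => _ lin _; have := lin 1 y z w; rewrite scale1r mul1r. Qed.

Lemma ipNl y w : ip (- y) w = - ip y w.
Proof.
case: hip => _ lin _; have := lin (-1) y 0 w.
have ip0 : ip 0 w = 0 by have := ipD 0 0 w; rewrite addr0; lra.
by rewrite addr0 scaleN1r ip0 addr0 mulN1r.
Qed.

Lemma ipBr w y z : ip w (y - z) = ip w y - ip w z.
Proof. by case: hip => sym _ _; rewrite !(sym w) ipD ipNl. Qed.

(* Cauchy-Schwarz, derived from the triangle inequality of the induced norm. *)
Lemma ip_le y z : ip y z <= `|y| * `|z|.
Proof.
case: hip => sym _ sq.
have e : ip (y + z) (y + z) = ip y y + 2 * ip y z + ip z z.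
  by rewrite ipD (sym y (y + z)) (sym z (y + z)) !ipD (sym z y); ring.
move: e; rewrite !sq => e.
have : `|y + z| ^+ 2 <= (`|y| + `|z|) ^+ 2.
  by rewrite ler_sqr ?nnegrE ?addr_ge0 // ler_normD.
nra.
Qed.

Lemma ip_abs y z : `|ip y z| <= `|y| * `|z|.
Proof.
rewrite ler_norml ip_le andbT lerNl -ipNl.
by apply: le_trans (ip_le _ _) _; rewrite normrN.
Qed.

(* Each functional ip w is Lipschitz, hence continuous on Y. *)
Lemma ip_continuous w : continuous (ip w).
Proof.
move=> y; apply/cvgrPdist_lt => e e0; near=> v.
have w1 : 0 < `|w| + 1 by rewrite ltr_wpDl.
apply: (@le_lt_trans _ _ (`|w| * `|y - v|)).
  by rewrite -ipBr ip_abs.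
have : `|y - v| < e / (`|w| + 1).
  by near: v; apply: cvgr_dist_lt; rewrite // divr_gt0.
rewrite ltr_pdivlMr // => h.
apply: le_lt_trans h; rewrite mulrDr mulr1 ler_wpDr //.
by rewrite mulrC.
Unshelve. all: by end_near.
Qed.

Lemma ip_self_eq0 w : ip w w = 0 -> w = 0.
Proof. by case: hip => _ _ -> /eqP; rewrite sqrf_eq0 normr_eq0 => /eqP. Qed.

Lemma cluster_weak_limit (X : topologicalType) (A : X -> Y)
    (hA : forall w, continuous (fun v => ip w (A v)))
    (T : Type) (F : set_system T) {FF : Filter F} (u : T -> X) (y : Y) (z : X) :
  A \o u @ F --> y -> cluster (u @ F) z -> A z = y.
Proof.
move=> Auy; rewrite cluster_cvgE => -[G PG [Gz uFG]].
set w := A z - y.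
have g_z : (fun v => ip w (A v)) @ G --> ip w (A z) := cvg_trans (cvg_app _ Gz) (hA w z).
have g_y : (fun v => ip w (A v)) @ G --> ip w y.
  apply: cvg_trans (cvg_trans (cvg_app (ip w) Auy) (@ip_continuous w y)).
  by move=> P /= hP; apply: uFG.
have : ip w w = 0.
  by rewrite {2}/w ipBr; apply/eqP; rewrite subr_eq0; apply/eqP; exact: cvg_unique g_z g_y.
by move/ip_self_eq0/eqP; rewrite subr_eq0 => /eqP.
Qed.

End InnerProduct.

Section Tikhonov.
Variables (R : realType) (X : tvsType R) (Y : completeNormedModType R).
Variables (A : {linear X -> Y}) (F : X -> \bar R) (x : X) (xa : R -> X).
Variable ip : Y -> Y -> R.
Hypothesis hip : is_inner_product ip.
Hypothesis hA : tau_weak_continuous ip A.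
Hypothesis hFp : proper_fun F.
Hypothesis hFc : convex_fun F.
Hypothesis hFk : forall lam : R, compact [set z : X | (F z <= lam%:E)%E].
Hypothesis hx : dom F x.
Hypothesis hxinf : F x = ereal_inf [set F z | z in [set z : X | A z = A x]].
Hypothesis hxa : forall alpha, 0 < alpha -> tikh_argmin A F alpha (A x) (xa alpha).

Lemma dom_fin z : dom F z -> F z = (fine (F z))%:E.
Proof.
move=> hz; rewrite fineK // fin_numE; case: hFp => not_ninfty _.
by rewrite not_ninfty (lt_eqF hz).
Qed.

Lemma dom_xa a : 0 < a -> dom F (xa a).
Proof. by move=> a0; case: (hxa a0). Qed.

Let fx := fine (F x).
Let fa a := fine (F (xa a)).
Let res a := `|A x - A (xa a)|.

Lemma tikh_optimality a z : 0 < a -> dom F z ->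
  fa a + (2 * a)^-1 * res a ^+ 2 <= fine (F z) + (2 * a)^-1 * `|A x - A z| ^+ 2.
Proof.
move=> a0 hz; have [hd opt] := hxa a0.
have := opt z hz; rewrite /tikh (dom_fin hd) (dom_fin hz) -!EFinD lee_fin.
rewrite /fa /res; lra.
Qed.

Lemma defectE a : 0 < a -> defect A F x xa a = fx - (fa a + (2 * a)^-1 * res a ^+ 2).
Proof.
move=> a0; rewrite /defect /tikh subrr normr0 expr0n mulr0 add0e.
by rewrite (dom_fin hx) (dom_fin (dom_xa a0)) -EFinD /= [_ + fine _]addrC.
Qed.

Lemma defect_le_gap a : 0 < a -> defect A F x xa a <= fx - fa a.
Proof.
move=> a0; rewrite defectE //.
have : 0 <= (2 * a)^-1 * res a ^+ 2 by rewrite mulr_ge0 ?sqr_ge0 ?invr_ge0 ?mulr_ge0 ?ltW.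
lra.
Qed.

(* Comparing x_b with the competitor x_a: the defect grows from b to a by at
   most res(a)^2 (1/(2b) - 1/(2a)); this is the discrete form of
   sigma'(alpha) = res(alpha)^2 / (2 alpha^2). *)
Lemma defect_increment a b : 0 < b -> b < a ->
  defect A F x xa a - defect A F x xa b <= res a ^+ 2 * ((2 * b)^-1 - (2 * a)^-1).
Proof.
move=> b0 ba; have a0 : 0 < a by apply: lt_trans ba.
rewrite (defectE a0) (defectE b0).
have := tikh_optimality b0 (dom_xa a0); rewrite -/(res a) -/(fa a) /fx.
lra.
Qed.

(* Convexity of F: testing optimality of x_a against the convex combination
   t x + (1 - t) x_a and letting t -> 0 gives res(a)^2 / a <= R(x) - R(x_a). *)
Lemma residual_le_gap a : 0 < a -> res a ^+ 2 / a <= fx - fa a.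
Proof.
move=> a0; set k := (2 * a)^-1 * res a ^+ 2.
have -> : res a ^+ 2 / a = 2 * k by rewrite /k; field; rewrite gt_eqF.
apply: (@le_vanishing_slack _ _ _ k) => t /andP[t0 t1].
set z := t *: x + (1 - t) *: xa a.
have conv := @hFc x (xa a) t (introT andP (conj t0 t1)).
rewrite -/z (dom_fin hx) (dom_fin (dom_xa a0)) -!EFinM -EFinD in conv.
have hz : dom F z by apply: le_lt_trans conv _; exact: ltry.
rewrite (dom_fin hz) lee_fin in conv.
have Az : A x - A z = (1 - t) *: (A x - A (xa a)).
  by rewrite /z linearD !linearZ /= scalerBr !scalerBl !scale1r opprD addrA.
have := tikh_optimality a0 hz.
have t1' : 0 <= 1 - t by rewrite subr_ge0 ltW.
rewrite Az normrZ (ger0_norm t1') exprMn -/(res a) -/(fa a) -/fx.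
have -> : (2 * a)^-1 * ((1 - t) ^+ 2 * res a ^+ 2) = (1 - t) ^+ 2 * k by rewrite /k; ring.
move: conv; rewrite -/fx -/(fa a) => conv; rewrite -/k => opt.
have : t * (2 * k - t * k) <= t * (fx - fa a).
  have -> : t * (2 * k - t * k) = k - (1 - t) ^+ 2 * k by ring.
  have -> : t * (fx - fa a) = t * fx + (1 - t) * fa a - fa a by ring.
  lra.
by rewrite ler_pM2l.
Qed.

(* The compactness step: if the residuals vanish as alpha -> 0+, so does the
   gap R(x) - R(x_alpha).  Otherwise some x_(b_n), b_n -> 0, stay in a
   sublevel set {F <= R(x) - e}; a cluster point z of them satisfies A z = A x
   by weak continuity of A, contradicting the minimality of R(x). *)
Lemma gap_vanishes :
  (forall e, 0 < e -> exists2 d, 0 < d & forall b, 0 < b -> b < d -> res b <= e) ->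
  forall e, 0 < e -> exists2 d, 0 < d & forall b, 0 < b -> b < d -> fx - fa b <= e.
Proof.
move=> res_vanish e e0; apply: contrapT => no_delta.
have bad : forall n : nat, exists b, [/\ 0 < b, b < n.+1%:R^-1 & e < fx - fa b].
  move=> n; apply: contrapT => none; apply: no_delta; exists n.+1%:R^-1 => // b b0 bn.
  by rewrite leNgt; apply/negP => gap; apply: none; exists b.
have [beta hbeta] := choice bad.
pose u n := xa (beta n).
have u_sub : (u @ \oo) [set z | (F z <= (fx - e)%:E)%E].
  suff : \forall n \near \oo, (F (u n) <= (fx - e)%:E)%E by [].
  near=> n; have [b0 _ gap] := hbeta n.
  by rewrite /= /u (dom_fin (dom_xa b0)) lee_fin -/(fa _); lra.
have [z [Kz clz]] := hFk _ u_sub.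
have Au : A \o u @ \oo --> A x.
  apply/cvgrPdist_le => eps eps0; have [d d0 small] := res_vanish eps eps0.
  near=> n; have [b0 bn _] := hbeta n; apply: small => //.
  apply: lt_trans bn _; near: n; exact: near_infty_natSinv_lt (PosNum d0).
have Azx : A z = A x by exact: (cluster_weak_limit hip hA Au clz).
have : (F x <= F z)%E by rewrite hxinf; apply: ereal_inf_lbound; exists z.
rewrite (dom_fin hx) => /le_trans /(_ Kz); rewrite lee_fin /fx; lra.
Unshelve. all: by end_near.
Qed.

(* (i) => (ii): integrate the defect increments along geometric sequences. *)
Lemma rate_i_ii nu c1 : 2^-1 < nu <= 1 -> 0 < c1 ->
  (forall a, 0 < a -> res a <= c1 * a `^ nu) ->
  forall a, 0 < a -> defect A F x xa a <= c1 ^+ 2 / (4 * nu - 2) * a `^ (2 * nu - 1).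
Proof.
move=> hnu c10 rate; have /andP[s0 _] := rate_exponent hnu.
have nu0 := rate_nu_pos hnu.
have -> : c1 ^+ 2 / (4 * nu - 2) = c1 ^+ 2 / 2 / (2 * nu - 1).
  by field; apply/andP; split; rewrite ?gt_eqF //; lra.
apply: power_bound_of_decrements (rate_exponent hnu) _ _ _.
- by rewrite divr_ge0 ?sqr_ge0.
- move=> a q a0 /andP[q0 q1].
  have qa0 : 0 < q * a by rewrite mulr_gt0.
  have := defect_increment qa0 (_ : q * a < a); rewrite gtr_pMl // => /(_ q1).
  have sq : res a ^+ 2 <= c1 ^+ 2 * (a `^ (2 * nu - 1) * a).
    have r0 : 0 <= res a := normr_ge0 _.
    rewrite -powR_sq_shift // -exprMn ler_sqr ?nnegrE ?rate //.
    exact: le_trans r0 (rate _ a0).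
  have w0 : 0 <= (2 * (q * a))^-1 - (2 * a)^-1.
    by rewrite subr_ge0 lef_pV2 ?posrE ?mulr_gt0 // ler_pM2l // ltW // gtr_pMl.
  move/le_trans; apply; apply: le_trans (ler_wpM2r w0 sq) _.
  by rewrite le_eqVlt; apply/orP; left; apply/eqP; field; rewrite !gt_eqF.
- move=> e e0; have [d d0 gap] := gap_vanishes (power_rate_vanishes c10 nu0 rate) e0.
  by exists d => // b b0 bd; apply: le_trans (defect_le_gap b0) (gap _ b0 bd).
Qed.

(* (ii) => (iii): test the defect bound at the alpha balancing both terms
   of the Tikhonov functional evaluated at z. *)
Lemma rate_ii_iii nu c2 : 2^-1 < nu <= 1 -> 0 < c2 ->
  (forall a, 0 < a -> defect A F x xa a <= c2 * a `^ (2 * nu - 1)) ->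
  forall z, (F x - F z <=
    (2 * c2 `^ (2 * nu)^-1 * `|A x - A z| `^ ((2 * nu - 1) / nu))%:E)%E.
Proof.
move=> hnu c20 rate z; have /andP[s0 _] := rate_exponent hnu.
have nu0 := rate_nu_pos hnu.
have [hz|not_dom] := pselect (dom F z); last first.
  have -> : F z = +oo%E by apply/eqP; rewrite eq_le leey leNgt; apply/negP.
  by rewrite (dom_fin hx) leNye.
rewrite (dom_fin hx) (dom_fin hz) -EFinB lee_fin -/fx.
set d := `|A x - A z|; set U := c2 `^ (2 * nu)^-1 * d `^ ((2 * nu - 1) / nu).
have U0 : 0 <= U by rewrite mulr_ge0 ?powR_ge0.
rewrite -mulrA -/U.
have [d0|d_pos] := eqVneq d 0.
  have Azx : A z = A x by apply/eqP; rewrite eq_sym -subr_eq0 -normr_eq0 -/d d0.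
  have : (F x <= F z)%E by rewrite hxinf; apply: ereal_inf_lbound; exists z.
  rewrite {1}(dom_fin hx) {1}(dom_fin hz) lee_fin -/fx; lra.
have d_gt0 : 0 < d by rewrite lt_neqAle eq_sym d_pos normr_ge0.
have [al al0 [defect_eq res_eq]] := balanced_parameter c20 d_gt0 nu0.
have := rate _ al0; rewrite defectE // defect_eq -/U.
have := tikh_optimality al0 hz; rewrite -/d.
have -> : (2 * al)^-1 * d ^+ 2 = 2^-1 * (d ^+ 2 / al) by field; rewrite gt_eqF.
rewrite res_eq -/U; have : 0 <= (2 * al)^-1 * res al ^+ 2.
  by rewrite mulr_ge0 ?sqr_ge0 // invr_ge0 mulr_ge0 // ltW.
have : 2^-1 * U <= U by rewrite ler_piMl // invf_le1 ?ler1n.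
lra.
Qed.

(* (iii) => (i): combine (iii) at z = x_a with the convexity bound
   res(a)^2 / a <= R(x) - R(x_a) and absorb the power of the residual. *)
Lemma rate_iii_i nu c3 : 0 < nu -> 0 < c3 ->
  (forall z, (F x - F z <= (c3 * `|A x - A z| `^ ((2 * nu - 1) / nu))%:E)%E) ->
  forall a, 0 < a -> res a <= c3 `^ nu * a `^ nu.
Proof.
move=> nu0 c30 rate a a0.
have := rate (xa a); rewrite (dom_fin hx) (dom_fin (dom_xa a0)) -EFinB lee_fin.
rewrite -/fx -/(fa a) -/(res a) => gap_le.
have ac0 : 0 <= a * c3 by rewrite mulr_ge0 // ltW.
have := residual_le_gap a0; rewrite ler_pdivrMr // mulrC => res_le.
rewrite -(powRM _ (ltW c30) (ltW a0)) mulrC.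
apply: (powR_absorb (normr_ge0 _) ac0 nu0).
by apply: le_trans res_le _; rewrite -mulrA ler_wpM2l // ltW.
Qed.

End Tikhonov.

Theorem theorem3 (R : realType)
  (X : tvsType R) (hX : hausdorff_space X)
  (nX : X -> R) (hnX : is_banach_norm nX)
  (Y : completeNormedModType R) (ip : Y -> Y -> R) (hip : is_inner_product ip)
  (A : {linear X -> Y}) (hA : tau_weak_continuous ip A)
  (F : X -> \bar R) (hFp : proper_fun F) (hFc : convex_fun F)
  (hFk : forall lam : R, compact [set z : X | (F z <= lam%:E)%E])
  (nu : R) (hnu : 2^-1 < nu <= 1)
  (x : X) (hx : dom F x)
  (hxinf : F x = ereal_inf [set F z | z in [set z : X | A z = A x]])
  (xa : R -> X) (hxa : forall alpha : R, 0 < alpha -> tikh_argmin A F alpha (A x) (xa alpha)) :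
  let cond1 := fun c1 : R => forall alpha : R, 0 < alpha ->
      `|A x - A (xa alpha)| <= c1 * alpha `^ nu in
  let cond2 := fun c2 : R => forall alpha : R, 0 < alpha ->
      defect A F x xa alpha <= c2 * alpha `^ (2 * nu - 1) in
  let cond3 := fun c3 : R => forall z : X,
      (F x - F z <= (c3 * `|A x - A z| `^ ((2 * nu - 1) / nu))%:E)%E in
  [/\ ((exists2 c1 : R, 0 < c1 & cond1 c1) <-> (exists2 c2 : R, 0 < c2 & cond2 c2)),
      ((exists2 c2 : R, 0 < c2 & cond2 c2) <-> (exists2 c3 : R, 0 < c3 & cond3 c3)),
      (forall c1 : R, 0 < c1 -> cond1 c1 -> cond2 (c1 ^+ 2 / (4 * nu - 2))),
      (forall c2 : R, 0 < c2 -> cond2 c2 -> cond3 (2 * c2 `^ (2 * nu)^-1)) &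
      (forall c3 : R, 0 < c3 -> cond3 c3 -> cond1 (c3 `^ nu))].
Proof.
move=> cond1 cond2 cond3.
have /andP[s0 _] := rate_exponent hnu.
have nu0 := rate_nu_pos hnu.
have i_ii c1 : 0 < c1 -> cond1 c1 -> cond2 (c1 ^+ 2 / (4 * nu - 2)).
  by move=> c10 H1; exact (rate_i_ii hip hA hFp hFk hx hxinf hxa hnu c10 H1).
have ii_iii c2 : 0 < c2 -> cond2 c2 -> cond3 (2 * c2 `^ (2 * nu)^-1).
  by move=> c20 H2; exact (rate_ii_iii hFp hx hxinf hxa hnu c20 H2).
have iii_i c3 : 0 < c3 -> cond3 c3 -> cond1 (c3 `^ nu).
  by move=> c30 H3; exact (rate_iii_i hFp hFc hx hxa nu0 c30 H3).
have pos2 c1 : 0 < c1 -> 0 < c1 ^+ 2 / (4 * nu - 2).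
  by move=> c10; rewrite divr_gt0 ?exprn_gt0 //; lra.
have pos3 c2 : 0 < c2 -> 0 < 2 * c2 `^ (2 * nu)^-1 by move=> c20; rewrite mulr_gt0 ?powR_gt0.
have pos1 c3 : 0 < c3 -> 0 < c3 `^ nu by move=> c30; rewrite powR_gt0.
split=> //; split.
- by case=> c1 c10 H1; exists (c1 ^+ 2 / (4 * nu - 2)); [exact: pos2 | exact: i_ii].
- case=> c2 c20 H2; exists ((2 * c2 `^ (2 * nu)^-1) `^ nu); first exact: pos1 (pos3 _ c20).
  exact: iii_i (pos3 _ c20) (ii_iii _ c20 H2).
- by case=> c2 c20 H2; exists (2 * c2 `^ (2 * nu)^-1); [exact: pos3 | exact: ii_iii].
- case=> c3 c30 H3; exists ((c3 `^ nu) ^+ 2 / (4 * nu - 2)); first exact: pos2 (pos1 _ c30).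
  exact: i_ii (pos1 _ c30) (iii_i _ c30 H3).
Qed.
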